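(* Under the setting below, assume moreover that $f_\Theta^\star$ is strictly decreasing and continuous from $[0,\infty)$ onto $(0,1]$, with inverse $f_\Theta^{\star-1}$. Then each marginal satisfies $\Pr(X_i> x)=f_\Theta^\star(x)$ for $x\ge0$, and the survival copula $C$ of $(X_1,\dots,X_n)$, i.e. the function with $\Pr(X_1> x_1,\dots,X_n> x_n)=C\big(f_\Theta^\star(x_1),\dots,f_\Theta^\star(x_n)\big)$, is given for $u_i\in(0,1]$ by $$C(u_1,\dots,u_n)=\sum_{\ell_1=0}^{m_1}\cdots\sum_{\ell_n=0}^{m_n}\beta_{\ell_1,\dots,\ell_n}\,f_\Theta^\star\Big(\sum_{i=1}^n \ell_i\, f_\Theta^{\star-1}(u_i)\Big),$$ with $$\beta_{\ell_1,\dots,\ell_n}=\sum_{\nu_1=0}^{\ell_1}\cdots\sum_{\nu_n=0}^{\ell_n}(-1)^{\sum_{i=1}^n(\ell_i-\nu_i)}\Big[\prod_{i=1}^n\binom{m_i-\nu_i}{m_i-\ell_i}\Big]\Big[\prod_{i=1}^n\binom{m_i}{\nu_i}\Big]\alpha\Big(\tfrac{\nu_1}{m_1},\dots,\tfrac{\nu_n}{m_n}\Big).$$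
   Context: Setting: $n\ge2$, $m_1,\dots,m_n\ge1$ integers; $\alpha$ is a real function on the grid $\prod_i\{0,\tfrac1{m_i},\dots,1\}$ such that $C_B(u_1,\dots,u_n)=\sum_{\nu_1=0}^{m_1}\cdots\sum_{\nu_n=0}^{m_n}\alpha(\tfrac{\nu_1}{m_1},\dots,\tfrac{\nu_n}{m_n})\prod_{i=1}^n\binom{m_i}{\nu_i}u_i^{\nu_i}(1-u_i)^{m_i-\nu_i}$ is a copula on $[0,1]^n$. $(Z_1,\dots,Z_n)$ has standard exponential marginals and joint survival function $\Pr(Z_1>z_1,\dots,Z_n>z_n)=C_B(e^{-z_1},\dots,e^{-z_n})$. $\Theta$ is a positive random variable independent of $(Z_1,\dots,Z_n)$ with density $f_\Theta$ and Laplace transform $f_\Theta^\star(s)=E[e^{-s\Theta}]$, and $X_i=Z_i/\Theta$. *)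

From HB Require Import structures.
From mathcomp Require Import all_boot all_order all_algebra.
From mathcomp Require Import all_classical all_reals all_analysis.
Set Implicit Arguments. Unset Strict Implicit. Unset Printing Implicit Defensive.
Import Order.TTheory GRing.Theory Num.Theory numFieldNormedType.Exports.
Local Open Scope classical_set_scope.
Local Open Scope ring_scope.

Section defs.
Variable R : realType.

Definition copula (n : nat) (C : ('I_n -> R) -> R) : Prop :=
  [/\
      (forall u : 'I_n -> R, (forall i, 0 <= u i <= 1) ->
         (exists i, u i = 0) -> C u = 0),
      (forall (u : 'I_n -> R) (i : 'I_n), 0 <= u i <= 1 ->
         (forall j, j != i -> u j = 1) -> C u = u i) &
      (* n-increasing: nonnegative C-volume of every box [a,b] in [0,1]^n *)
      (forall a b : 'I_n -> R, (forall i, 0 <= a i /\ a i <= b i /\ b i <= 1) ->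
         0 <= \sum_(e : {ffun 'I_n -> bool})
                (-1) ^+ #|[set i | ~~ e i]| * C (fun i => if e i then b i else a i))].

(* a bound for all the m_i, used to index multi-indices nu with nu_i <= m_i *)
Definition mmax (n : nat) (m : 'I_n -> nat) : nat := \max_(i < n) m i.

Definition bernstein_copula (n : nat) (m : 'I_n -> nat) (alpha : ('I_n -> R) -> R)
  (u : 'I_n -> R) : R :=
  \sum_(nu : {ffun 'I_n -> 'I_(mmax m).+1} | [forall i, (nu i <= m i)%N])
     alpha (fun i => (nu i)%:R / (m i)%:R) *
     \prod_(i < n) ('C(m i, nu i)%:R * u i ^+ nu i * (1 - u i) ^+ (m i - nu i)).

Definition beta_coef (n : nat) (m : 'I_n -> nat) (alpha : ('I_n -> R) -> R)
  (l : 'I_n -> nat) : R :=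
  \sum_(nu : {ffun 'I_n -> 'I_(mmax m).+1} | [forall i, (nu i <= l i)%N])
     (-1) ^+ (\sum_(i < n) (l i - nu i))%N *
     (\prod_(i < n) 'C(m i - nu i, m i - l i)%:R) *
     (\prod_(i < n) 'C(m i, nu i)%:R) *
     alpha (fun i => (nu i)%:R / (m i)%:R).

(* the claimed survival copula, with L the Laplace transform, Linv its inverse *)
Definition survival_copula (n : nat) (m : 'I_n -> nat) (alpha : ('I_n -> R) -> R)
  (L Linv : R -> R) (u : 'I_n -> R) : R :=
  \sum_(l : {ffun 'I_n -> 'I_(mmax m).+1} | [forall i, (l i <= m i)%N])
     beta_coef m alpha (fun i => nat_of_ord (l i)) *
     L (\sum_(i < n) (l i)%:R * Linv (u i)).

Context {d : measure_display} {T : measurableType d}.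

Definition laplace (P : probability T R) (Theta : T -> R) (s : R) : R :=
  fine ('E_P[fun w => expR (- (s * Theta w))])%E.

Definition has_density (P : probability T R) (Theta : T -> R) (f : R -> R) : Prop :=
  [/\ measurable_fun setT f, (forall x, 0 <= f x) &
      forall A : set R, measurable A ->
        P (Theta @^-1` A) = (\int[lebesgue_measure]_(x in A) (f x)%:E)%E].

(* Theta independent of the random vector (Z_1,...,Z_n): product rule on
   sigma(Theta) x (measurable rectangles generating sigma(Z_1,...,Z_n)) *)
Definition indep_vec (P : probability T R) (n : nat) (Theta : T -> R)
  (Z : 'I_n -> T -> R) : Prop :=
  forall (A : set R) (B : 'I_n -> set R), measurable A -> (forall i, measurable (B i)) ->
    P (Theta @^-1` A `&` [set w | forall i, B i (Z i w)]) =
    (P (Theta @^-1` A) * P [set w | forall i, B i (Z i w)])%E.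

End defs.

(* Since Theta > 0, the event {X > x} is {Z > Theta x}.  The heart of the proof
   is a mixing lemma (measure_exp_mixture): if the events D t = {Z > t x}
   factorize against Theta with an exponential polynomial sum_j b_j exp(-s_j t),
   then the event obtained by substituting t := Theta has probability
   sum_j b_j L(s_j), L the Laplace transform of Theta.  It is proved using only
   the product rule on {Theta in A} x {Z > t x}: cut the range of Theta into bins
   [kh, (k+1)h[, squeeze each bin's contribution between the values at the bin
   ends, sum over the bins, and compare the sums with L(s_j); the error is O(h).
   For the margins the exponential polynomial is exp(-x t).  For the joint law,
   the Bernstein copula in the power basis reads C_B(u) = sum_l beta_l u^l, which
   at u_i = exp(-x_i t) is sum_l beta_l exp(-(l.x) t); finally
   L(l.x) = L(sum_i l_i L^-1(L(x_i))) gives the claimed copula. *)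
From HB Require Import structures.
From mathcomp Require Import all_boot all_order all_algebra.
From mathcomp Require Import all_classical all_reals all_analysis.
From mathcomp Require Import measurable_realfun.
From mathcomp Require Import ring lra zify.
Set Implicit Arguments. Unset Strict Implicit. Unset Printing Implicit Defensive.
Import Order.TTheory GRing.Theory Num.Theory numFieldNormedType.Exports.
Local Open Scope classical_set_scope.
Local Open Scope ring_scope.

Section exponential_mixture.
Context {R : realType} {d : measure_display} {T : measurableType d}
  (P : probability T R) (Theta : T -> R).
Hypothesis mTheta : measurable_fun setT Theta.
Hypothesis Theta_ge0 : forall w, 0 <= Theta w.

Section binning.
Variable h : R.
Hypothesis h_gt0 : 0 < h.

Lemma grid_ge0 k : 0 <= k%:R * h.
Proof. by rewrite mulr_ge0 // ltW. Qed.

Definition bin (k : nat) : set T := Theta @^-1` `[k%:R * h, k.+1%:R * h[.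

Lemma measurable_bin k : measurable (bin k).
Proof. by rewrite /bin -[X in measurable X]setTI; apply: mTheta. Qed.

Lemma trivIset_bin : trivIset setT bin.
Proof.
move=> i j _ _ [w []]; rewrite /bin /= !in_itv /= => /andP[ih hi] /andP[jh hj].
have /[!ltr_nat] : (i%:R < j.+1%:R :> R).
  by rewrite -(ltr_pM2r h_gt0); exact: le_lt_trans ih hj.
have /[!ltr_nat] : (j%:R < i.+1%:R :> R).
  by rewrite -(ltr_pM2r h_gt0); exact: le_lt_trans jh hi.
by rewrite !ltnS => ji ij; apply/eqP; rewrite eqn_leq ij ji.
Qed.

Lemma bigcup_bin : \bigcup_k bin k = setT.
Proof.
apply/seteqP; split => // w _.
have t0 : 0 <= Theta w / h by rewrite divr_ge0 // ltW.
exists (Num.truncn (Theta w / h)) => //; have /andP[lo hi] := truncn_itv t0.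
by rewrite /bin /= in_itv /= -ler_pdivlMr // lo /= -ltr_pdivrMr.
Qed.

Lemma measure_bin_series (E : set T) : measurable E ->
  P E = (\sum_(0 <= k <oo) P (E `&` bin k))%E.
Proof.
move=> mE; rewrite -[in LHS](setIT E) -bigcup_bin setI_bigcupr.
rewrite measure_bigcup //=; last 2 first.
- by move=> k _; apply: measurableI => //; exact: measurable_bin.
- by apply: trivIset_setIl; exact: trivIset_bin.
by rewrite eseries_mkcond; apply: eq_eseriesr => k _; rewrite in_setT.
Qed.

Definition bin_prob (k : nat) : R := fine (P (bin k)).

Lemma bin_probE k : P (bin k) = (bin_prob k)%:E.
Proof. by rewrite /bin_prob fineK // fin_num_measure //; exact: measurable_bin. Qed.

Lemma bin_prob_ge0 k : 0 <= bin_prob k.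
Proof. by rewrite /bin_prob fine_ge0 // measure_ge0. Qed.

(* discretized Laplace transform: Theta replaced on the k-th bin by phi k *)
Definition grid_laplace (s : R) (phi : nat -> R) : \bar R :=
  (\sum_(0 <= k <oo) (bin_prob k * expR (- (s * phi k)))%:E)%E.

Lemma grid_laplace_ge0 s phi : (0 <= grid_laplace s phi)%E.
Proof. by apply: nneseries_ge0 => k _ _; rewrite lee_fin mulr_ge0 ?bin_prob_ge0. Qed.

Lemma grid_laplace_le1 s phi : 0 <= s -> (forall k, 0 <= phi k) ->
  (grid_laplace s phi <= 1)%E.
Proof.
move=> s0 phi0; rewrite -(probability_setT P) (@measure_bin_series setT measurableT).
apply: lee_nneseries => [k _ _|k _]; first by rewrite lee_fin mulr_ge0 ?bin_prob_ge0.
by rewrite setTI bin_probE lee_fin ler_piMr ?bin_prob_ge0 // expR_le1 oppr_le0 mulr_ge0.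
Qed.

Lemma grid_laplace_fin s phi : 0 <= s -> (forall k, 0 <= phi k) ->
  (fine (grid_laplace s phi))%:E = grid_laplace s phi.
Proof.
move=> s0 phi0; rewrite fineK // ge0_fin_numE ?grid_laplace_ge0 //.
by apply: (@le_lt_trans _ _ 1%E); [exact: grid_laplace_le1|exact: ltry].
Qed.

Lemma grid_laplace_shift s : grid_laplace s (fun k => k.+1%:R * h) =
  ((expR (- (s * h)))%:E * grid_laplace s (fun k => k%:R * h)%R)%E.
Proof.
rewrite /grid_laplace -nneseriesZl => [|k _]; last first.
  by rewrite lee_fin mulr_ge0 ?bin_prob_ge0.
apply: eq_eseriesr => k _; rewrite -EFinM; congr EFin.
rewrite [RHS]mulrCA -expRD -addn1 natrD.
by congr (_ * expR _); ring.
Qed.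

Lemma measurable_exp_Theta (s : R) :
  measurable_fun setT (EFin \o (fun w => expR (- (s * Theta w)))).
Proof. by apply/measurable_EFinP; do 2 apply: measurableT_comp => //; exact: measurable_funM. Qed.

Lemma integral_bin_bounds (s : R) k : 0 <= s ->
  ((bin_prob k * expR (- (s * (k.+1%:R * h))))%:E
     <= \int[P]_(w in bin k) (expR (- (s * Theta w)))%:E)%E /\
  (\int[P]_(w in bin k) (expR (- (s * Theta w)))%:E
     <= (bin_prob k * expR (- (s * (k%:R * h))))%:E)%E.
Proof.
move=> s0; have mk := measurable_bin k.
have mexp := measurable_funS measurableT (@subsetT _ _) (measurable_exp_Theta s).
have intc c : (\int[P]_(w in bin k) (cst c%:E w) = (bin_prob k * c)%:E)%E.
  by rewrite integral_cst // EFinM muleC; congr (_ * _)%E; exact: bin_probE.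
have in_bin x : bin k x -> k%:R * h <= Theta x <= k.+1%:R * h.
  by rewrite /bin /= in_itv /= => /andP[-> /ltW ->].
rewrite -!intc; split; apply: ge0_le_integral => //.
- by move=> x _; rewrite lee_fin expR_ge0.
- move=> x /in_bin /andP[_ hi].
  by rewrite lee_fin ler_expR lerN2 ler_wpM2l.
- move=> x /in_bin /andP[lo _].
  by rewrite lee_fin ler_expR lerN2 ler_wpM2l.
Qed.

Lemma laplace_bracket s : 0 <= s ->
  (grid_laplace s (fun k => k.+1%:R * h)%R <= 'E_P[fun w => expR (- (s * Theta w))])%E /\
  ('E_P[fun w => expR (- (s * Theta w))] <= grid_laplace s (fun k => k%:R * h)%R)%E.
Proof.
move=> s0.
have -> : ('E_P[fun w => expR (- (s * Theta w))] =
    \sum_(0 <= k <oo) \int[P]_(w in bin k) (expR (- (s * Theta w)))%:E)%E.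
  rewrite unlock -ge0_integral_bigcup ?bigcup_bin //.
  - exact: measurable_bin.
  - exact: measurable_exp_Theta.
  - exact: trivIset_bin.
split; apply: lee_nneseries => k *.
- by rewrite lee_fin mulr_ge0 ?bin_prob_ge0.
- by case: (integral_bin_bounds k s0).
- by apply: integral_ge0 => x _; rewrite lee_fin expR_ge0.
- by case: (integral_bin_bounds k s0).
Qed.

Definition grid_hi (s : R) : R := fine (grid_laplace s (fun k => k%:R * h)).
Definition grid_lo (s : R) : R := fine (grid_laplace s (fun k => k.+1%:R * h)).

Lemma laplace_grid_close s : 0 <= s ->
  [/\ grid_lo s <= laplace P Theta s <= grid_hi s,
      grid_hi s <= laplace P Theta s + s * h &
      laplace P Theta s <= grid_lo s + s * h].
Proof.
move=> s0; have [lo hi] := laplace_bracket s0.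
have hiE := grid_laplace_fin s0 grid_ge0.
have loE := @grid_laplace_fin s _ s0 (fun k => grid_ge0 k.+1).
have Efin : ('E_P[fun w => expR (- (s * Theta w))] \is a fin_num)%E.
  rewrite ge0_fin_numE; last exact: le_trans (grid_laplace_ge0 _ _) lo.
  by apply: le_lt_trans hi _; rewrite -hiE ltry.
have lo_hi : grid_lo s = expR (- (s * h)) * grid_hi s.
  by apply: EFin_inj; rewrite EFinM /grid_lo loE grid_laplace_shift hiE.
have hi_le1 : grid_hi s <= 1.
  by rewrite -lee_fin hiE; apply: grid_laplace_le1 => //; exact: grid_ge0.
have hi_ge0 : 0 <= grid_hi s by rewrite fine_ge0 ?grid_laplace_ge0.
have L_lo : grid_lo s <= laplace P Theta s by rewrite -lee_fin loE /laplace fineK.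
have L_hi : laplace P Theta s <= grid_hi s by rewrite -lee_fin hiE /laplace fineK.
have e1 := expR_ge1Dx (- (s * h)).
have e0 : expR (- (s * h)) <= 1 by rewrite expR_le1 oppr_le0 mulr_ge0 // ltW.
have : (1 - expR (- (s * h))) * grid_hi s <= 1 - expR (- (s * h)).
  by rewrite ler_piMr // subr_ge0.
by rewrite L_lo L_hi; split => //; nra.
Qed.

Section sandwich.
(* Typically D t = {Z > t x} and E = {Z > Theta x}. *)
Variables (J : finType) (b s : J -> R) (E : set T) (D : R -> set T).
Hypothesis s_ge0 : forall j, 0 <= s j.
Hypothesis mE : measurable E.
Hypothesis mD : forall t, 0 <= t -> measurable (D t).
Hypothesis D_factor : forall t, 0 <= t -> forall A, measurable A ->
  P (Theta @^-1` A `&` D t) =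
  (P (Theta @^-1` A) * (\sum_j b j * expR (- (s j * t)))%:E)%E.
Hypothesis D_sub_E : forall a w, 0 <= a -> Theta w <= a -> D a w -> E w.
Hypothesis E_sub_D : forall a w, 0 <= a -> a <= Theta w -> E w -> D a w.

Definition expoly (c : J -> R) (t : R) : R := \sum_j c j * expR (- (s j * t)).

(* splitting the coefficients b = b^+ - b^- into nonnegative parts lets
   us sum the per-bin bounds as nonnegative extended-real series *)
Lemma expoly_ge0 c t : (forall j, 0 <= c j) -> 0 <= expoly c t.
Proof. by move=> c0; apply: sumr_ge0 => j _; rewrite mulr_ge0. Qed.

Lemma b_posneg j : b j = b^\+ j - b^\- j.
Proof. by rewrite -[in LHS](funrposBneg b). Qed.

Lemma expoly_posneg t : expoly b t = expoly b^\+ t - expoly b^\- t.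
Proof. by rewrite -sumrB; apply: eq_bigr => j _; rewrite -mulrBl -b_posneg. Qed.

Lemma measure_bin_D k t : 0 <= t -> P (bin k `&` D t) = (bin_prob k * expoly b t)%:E.
Proof. by move=> t0; rewrite D_factor // -/(bin k) bin_probE -EFinM. Qed.

Definition event_bin_prob (k : nat) : R := fine (P (E `&` bin k)).

Lemma event_bin_probE k : P (E `&` bin k) = (event_bin_prob k)%:E.
Proof.
by rewrite /event_bin_prob fineK // fin_num_measure //; apply: measurableI => //; exact: measurable_bin.
Qed.

Lemma event_bin_bounds k :
  bin_prob k * expoly b (k.+1%:R * h) <= event_bin_prob k <= bin_prob k * expoly b (k%:R * h).
Proof.
have mbin := measurable_bin k.
have mbD t : 0 <= t -> measurable (bin k `&` D t) by move=> t0; apply: measurableI => //; exact: mD.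
have mEbin : measurable (E `&` bin k) by exact: measurableI.
rewrite -!lee_fin -measure_bin_D ?grid_ge0 // -measure_bin_D ?grid_ge0 // -event_bin_probE.
apply/andP; split; apply: le_measure; rewrite ?inE;
  try solve [exact: mEbin | exact: mbD (grid_ge0 _)].
- move=> w [bw Dw]; split => //; apply: D_sub_E Dw; first exact: grid_ge0.
  by move: bw; rewrite /bin /= in_itv /= => /andP[_ /ltW].
- move=> w [Ew bw]; split => //; apply: E_sub_D Ew; first exact: grid_ge0.
  by move: bw; rewrite /bin /= in_itv /= => /andP[].
Qed.

Lemma series_expoly (c : J -> R) (phi : nat -> R) :
  (forall j, 0 <= c j) -> (forall k, 0 <= phi k) ->
  (\sum_(0 <= k <oo) (bin_prob k * expoly c (phi k))%:E)%E =
  (\sum_j c j * fine (grid_laplace (s j) phi))%:E.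
Proof.
move=> c0 phi0; rewrite /expoly.
under eq_eseriesr do rewrite mulr_sumr -sumEFin.
rewrite nneseries_sum => [|j k _]; last by rewrite lee_fin !mulr_ge0 ?bin_prob_ge0.
rewrite -sumEFin; apply: eq_bigr => j _.
rewrite EFinM grid_laplace_fin // /grid_laplace -nneseriesZl => [|k _]; last first.
  by rewrite lee_fin mulr_ge0 ?bin_prob_ge0.
by apply: eq_eseriesr => k _; rewrite -EFinM mulrCA.
Qed.

Lemma series_event_expoly (c : J -> R) (phi : nat -> R) :
  (forall j, 0 <= c j) -> (forall k, 0 <= phi k) ->
  (\sum_(0 <= k <oo) (event_bin_prob k + bin_prob k * expoly c (phi k))%:E)%E =
  (fine (P E) + \sum_j c j * fine (grid_laplace (s j) phi))%:E.
Proof.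
move=> c0 phi0; under eq_eseriesr do rewrite EFinD.
rewrite nneseriesD => [|k _ _|k _ _]; last 2 first.
- by rewrite lee_fin fine_ge0 ?measure_ge0.
- by rewrite lee_fin mulr_ge0 ?bin_prob_ge0 ?expoly_ge0.
rewrite series_expoly // EFinD; congr (_ + _)%E.
rewrite fineK ?fin_num_measure // (measure_bin_series mE).
by apply: eq_eseriesr => k _; rewrite event_bin_probE.
Qed.

Lemma event_prob_hi :
  fine (P E) + \sum_j b^\- j * grid_hi (s j) <= \sum_j b^\+ j * grid_hi (s j).
Proof.
rewrite -lee_fin -series_event_expoly -?series_expoly //; try exact: funrneg_ge0;
  try exact: funrpos_ge0; try exact: grid_ge0.
apply: lee_nneseries => k *.
  by rewrite lee_fin addr_ge0 ?fine_ge0 ?measure_ge0 // mulr_ge0 ?bin_prob_ge0 ?expoly_ge0.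
have /andP[_] := event_bin_bounds k.
by rewrite expoly_posneg mulrBr lee_fin; lra.
Qed.

Lemma event_prob_lo :
  \sum_j b^\+ j * grid_lo (s j) <= fine (P E) + \sum_j b^\- j * grid_lo (s j).
Proof.
rewrite -lee_fin -series_event_expoly -?series_expoly //; try exact: funrneg_ge0;
  try exact: funrpos_ge0; try (move=> k; exact: grid_ge0).
apply: lee_nneseries => k *.
  by rewrite lee_fin mulr_ge0 ?bin_prob_ge0 ?expoly_ge0.
have /andP[+ _] := event_bin_bounds k.
by rewrite expoly_posneg mulrBr lee_fin; lra.
Qed.

Lemma event_prob_close :
  `|fine (P E) - \sum_j b j * laplace P Theta (s j)| <= (\sum_j b^\+ j * s j) * h.
Proof.
have hi := event_prob_hi; have lo := event_prob_lo.
have Kh : (\sum_j b^\+ j * s j) * h = \sum_j b^\+ j * (s j * h).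
  by rewrite mulr_suml; apply: eq_bigr => j _; rewrite mulrA.
have step_hi : \sum_j b^\+ j * grid_hi (s j) - \sum_j b^\- j * grid_hi (s j) <=
    \sum_j b j * laplace P Theta (s j) + \sum_j b^\+ j * (s j * h).
  rewrite -sumrB -big_split; apply: ler_sum => j _ /=.
  have [/andP[_ Lhi] hiL _] := laplace_grid_close (s_ge0 j).
  have := funrpos_ge0 b j; have := funrneg_ge0 b j.
  rewrite b_posneg; nra.
have step_lo : \sum_j b j * laplace P Theta (s j) - \sum_j b^\+ j * (s j * h) <=
    \sum_j b^\+ j * grid_lo (s j) - \sum_j b^\- j * grid_lo (s j).
  rewrite -!sumrB; apply: ler_sum => j _ /=.
  have [/andP[loL _] _ Llo] := laplace_grid_close (s_ge0 j).
  have := funrpos_ge0 b j; have := funrneg_ge0 b j.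
  rewrite b_posneg; nra.
rewrite Kh ler_distlC; apply/andP; split; lra.
Qed.

End sandwich.
End binning.

Lemma measure_exp_mixture (J : finType) (b s : J -> R) (E : set T) (D : R -> set T) :
  (forall j, 0 <= s j) -> measurable E ->
  (forall t, 0 <= t -> measurable (D t)) ->
  (forall t, 0 <= t -> forall A, measurable A ->
    P (Theta @^-1` A `&` D t) =
    (P (Theta @^-1` A) * (\sum_j b j * expR (- (s j * t)))%:E)%E) ->
  (forall a w, 0 <= a -> Theta w <= a -> D a w -> E w) ->
  (forall a w, 0 <= a -> a <= Theta w -> E w -> D a w) ->
  P E = (\sum_j b j * laplace P Theta (s j))%:E.
Proof.
move=> s_ge0 mE mD D_factor D_sub_E E_sub_D.
set K := \sum_j b^\+ j * s j.
have K_ge0 : 0 <= K by apply: sumr_ge0 => j _; rewrite mulr_ge0 ?funrpos_ge0.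
rewrite -[LHS]fineK ?fin_num_measure //; congr EFin; apply/eqP.
rewrite -subr_eq0 -normr_le0; apply/ler_addgt0Pr => e e_gt0.
have h_gt0 : 0 < e / (K + 1) by rewrite divr_gt0 // ltr_wpDl.
apply: le_trans (event_prob_close h_gt0 s_ge0 mE mD D_factor D_sub_E E_sub_D) _.
by rewrite add0r -/K mulrA ler_pdivrMr ?ltr_wpDl //; nra.
Qed.

End exponential_mixture.

Section bernstein_power_basis.
Variable K : comNzRingType.

(* coefficient of x^k in the Bernstein basis polynomial C(m,nu) x^nu (1-x)^(m-nu) *)
Definition bernstein_coef (mi nu k : nat) : K :=
  if (nu <= k <= mi)%N then (-1) ^+ (k - nu) * 'C(mi - nu, mi - k)%:R * 'C(mi, nu)%:R
  else 0.

Lemma bernstein_basis_power (M mi nu : nat) (x : K) : (mi <= M)%N -> (nu <= mi)%N ->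
  'C(mi, nu)%:R * x ^+ nu * (1 - x) ^+ (mi - nu) =
  \sum_(k < M.+1) bernstein_coef mi nu k * x ^+ k.
Proof.
move=> mi_le_M nu_le_mi.
have -> : \sum_(k < M.+1) bernstein_coef mi nu k * x ^+ k =
          \sum_(nu <= k < mi.+1) bernstein_coef mi nu k * x ^+ k.
  rewrite (big_nat_widen _ _ _ _ _ (mi_le_M : (mi.+1 <= M.+1)%N)) big_geq_mkord.
  rewrite [RHS]big_mkcond /=; apply: eq_bigr => k _.
  by rewrite /bernstein_coef ltnS andbC; case: ifP; rewrite ?mul0r.
rewrite (big_addn 0 _ nu) subSn // big_mkord addrC exprD1n mulr_sumr.
apply: eq_bigr => t _; have t_le : (t <= mi - nu)%N by rewrite -ltnS.
rewrite /bernstein_coef addnK leq_addl /=.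
have -> : (t + nu <= mi)%N by lia.
have -> : (mi - (t + nu) = mi - nu - t)%N by lia.
rewrite bin_sub // -[(- x) ^+ t *+ _]mulr_natr.
have -> : (- x) ^+ t = (-1) ^+ t * x ^+ t by rewrite -exprMn mulN1r.
by rewrite exprD; ring.
Qed.

Lemma prod_cond0 (I : finType) (C : pred I) (F : I -> K) :
  \prod_i (if C i then F i else 0) = if [forall i, C i] then \prod_i F i else 0.
Proof.
case: ifP => [/forallP allC|/negbT]; first by apply: eq_bigr => i _; rewrite allC.
by rewrite negb_forall => /existsP[i /negbTE Ci]; rewrite (bigD1 i) //= Ci mul0r.
Qed.

End bernstein_power_basis.

Section bernstein_copula_power.
Variables (R : realType) (n : nat) (m : 'I_n -> nat) (alpha : ('I_n -> R) -> R).

Local Notation index := {ffun 'I_n -> 'I_(mmax m).+1}.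

Definition beta_box (l : index) : R :=
  if [forall i, (l i <= m i)%N] then beta_coef m alpha (fun i => nat_of_ord (l i)) else 0.

Lemma le_mmax i : (m i <= mmax m)%N.
Proof. exact: (@leq_bigmax _ (fun j : 'I_n => m j) i). Qed.

Lemma bernstein_copula_power (u : 'I_n -> R) :
  bernstein_copula m alpha u = \sum_l beta_box l * \prod_i u i ^+ l i.
Proof.
pose a (nu : index) := alpha (fun i => (nu i)%:R / (m i)%:R).
pose c (nu l : index) :=
  \prod_i bernstein_coef R (m i) (nu i) (l i).
have expand : bernstein_copula m alpha u =
    \sum_(nu : index | [forall i, (nu i <= m i)%N]) \sum_l a nu * c nu l * \prod_i u i ^+ l i.
  apply: eq_bigr => nu /forallP nu_le.
  rewrite (eq_bigr (fun i => \sum_(k < (mmax m).+1)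
    bernstein_coef R (m i) (nu i) k * u i ^+ k)); last first.
    by move=> i _; rewrite (bernstein_basis_power _ (le_mmax i)).
  rewrite bigA_distr_bigA mulr_sumr; apply: eq_bigr => l _.
  by rewrite big_split /= mulrA.
rewrite expand exchange_big /=; apply: eq_bigr => l _.
rewrite -mulr_suml; congr (_ * _).
rewrite /c; under eq_bigr do rewrite /bernstein_coef prod_cond0.
rewrite /beta_box; case: ifP => l_le; last first.
  apply: big1 => nu _; case: ifP => [/forallP nu_l|_]; last by rewrite mulr0.
  by move/negbT/negP: l_le; case; apply/forallP => i; case/andP: (nu_l i).
rewrite /beta_coef [LHS]big_mkcond [RHS]big_mkcond /=; apply: eq_bigr => nu _.
case: (boolP [forall i, (nu i <= l i)%N]) => nu_l; last first.
  case: ifP => // _.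
  case: ifP => [/forallP nu_l_m|_]; last by rewrite mulr0.
  by move/negP: nu_l; case; apply/forallP => i; case/andP: (nu_l_m i).
have -> : [forall i, (nu i <= m i)%N].
  by apply/forallP => i; exact: leq_trans (forallP nu_l i) (forallP l_le i).
have -> : [forall i, (nu i <= l i <= m i)%N].
  by apply/forallP => i; rewrite (forallP nu_l i) (forallP l_le i).
by rewrite /a !big_split /= prodrXr; ring.
Qed.

(* the slope l.x of the exponential that the monomial u^l becomes at
   u_i = exp(-x_i t) *)
Definition slope (x : 'I_n -> R) (l : index) : R :=
  \sum_i (l i)%:R * x i.

Lemma bernstein_copula_exp (x : 'I_n -> R) (t : R) :
  bernstein_copula m alpha (fun i => expR (- (x i * t))) =
  \sum_l beta_box l * expR (- (slope x l * t)).
Proof.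
rewrite bernstein_copula_power; apply: eq_bigr => l _; congr (_ * _).
under eq_bigr do rewrite -expRM_natl.
by rewrite -expR_sum /slope mulr_suml -sumrN; congr expR; apply: eq_bigr => i _; ring.
Qed.

Lemma survival_copula_laplace (L Linv : R -> R) (x : 'I_n -> R) :
  (forall i, 0 <= x i) -> (forall s, 0 <= s -> Linv (L s) = s) ->
  survival_copula m alpha L Linv (fun i => L (x i)) =
  \sum_l beta_box l * L (slope x l).
Proof.
move=> x_ge0 LinvK; rewrite /survival_copula [LHS]big_mkcond; apply: eq_bigr => l _.
rewrite /beta_box; case: ifP => _; last by rewrite mul0r.
by congr (_ * L _); apply: eq_bigr => i _; rewrite LinvK.
Qed.

End bernstein_copula_power.

Section scale_mixture.
Context {R : realType} {d : measure_display} {T : measurableType d}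
  (P : probability T R) (n : nat) (Z : 'I_n -> T -> R) (Theta : T -> R).
Hypothesis mZ : forall i, measurable_fun setT (Z i).
Hypothesis mTheta : measurable_fun setT Theta.
Hypothesis Theta_gt0 : forall w, 0 < Theta w.
Hypothesis indep : indep_vec P Theta Z.

Definition exceed (S : pred 'I_n) (x : 'I_n -> R) (y : T -> R) : set T :=
  [set w | forall i, S i -> x i * y w < Z i w].

Lemma measurable_exceed S x y : measurable_fun setT y -> measurable (exceed S x y).
Proof.
move=> my.
have -> : exceed S x y = \bigcap_(i in [set i | S i]) [set w | x i * y w < Z i w].
  by apply/seteqP; split => w /= Hw i; apply: Hw.
apply: fin_bigcap_measurable => [|i _]; first exact: finite_finset.
have -> : [set w | x i * y w < Z i w] = (Z i \- (fun w => x i * y w)) @^-1` `]0, +oo[.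
  by apply/seteqP; split => w /=; rewrite in_itv /= andbT subr_gt0.
rewrite -[X in measurable X]setTI; apply: measurable_funB => //.
exact: measurable_funM.
Qed.

Lemma scale_mixture_survival (S : pred 'I_n) (x : 'I_n -> R)
    (J : finType) (b s : J -> R) :
  (forall i, 0 <= x i) -> (forall j, 0 <= s j) ->
  (forall t, 0 <= t -> P (exceed S x (cst t)) = (\sum_j b j * expR (- (s j * t)))%:E) ->
  P [set w | forall i, S i -> x i < Z i w / Theta w] =
  (\sum_j b j * laplace P Theta (s j))%:E.
Proof.
move=> x_ge0 s_ge0 ray.
have -> : [set w | forall i, S i -> x i < Z i w / Theta w] = exceed S x Theta.
  by apply/seteqP; split => w /= Hw i /Hw; rewrite ltr_pdivlMr.
apply: (measure_exp_mixture mTheta (fun w => ltW (Theta_gt0 w)) s_ge0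
  (D := fun t => exceed S x (cst t))).
- exact: measurable_exceed.
- by move=> t _; exact: measurable_exceed.
- move=> t t0 A mA; pose B i := if S i then `]x i * t, +oo[%classic else setT.
  have exceedB : exceed S x (cst t) = [set w | forall i, B i (Z i w)].
    apply/seteqP; split => w /= Hw i.
      by rewrite /B; case: ifP => // Si; rewrite /= in_itv /= andbT; exact: Hw.
    by move=> Si; move: (Hw i); rewrite /B Si /= in_itv /= andbT.
  rewrite exceedB indep // => [|i]; last by rewrite /B; case: ifP.
  by rewrite -exceedB ray.
- by move=> a w a0 Ha Hw i /Hw; apply: le_lt_trans; rewrite ler_wpM2l.
- by move=> a w a0 Ha Hw i /Hw; apply: le_lt_trans; rewrite ler_wpM2l.
Qed.

End scale_mixture.

Theorem proposition1 (R : realType) (d : measure_display) (T : measurableType d)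
  (P : probability T R) (n : nat) (m : 'I_n -> nat) (alpha : ('I_n -> R) -> R)
  (Z : 'I_n -> T -> R) (Theta : T -> R) (fTheta : R -> R) (Linv : R -> R) :
  (2 <= n)%N ->
  (forall i, (1 <= m i)%N) ->
  copula (bernstein_copula m alpha) ->
  (forall i, measurable_fun setT (Z i)) ->
  (forall i (z : R), 0 <= z -> P [set w | z < Z i w] = (expR (- z))%:E) ->
  (forall z : 'I_n -> R, (forall i, 0 <= z i) ->
     P [set w | forall i, z i < Z i w] =
     (bernstein_copula m alpha (fun i => expR (- z i)))%:E) ->
  measurable_fun setT Theta ->
  (forall w, 0 < Theta w) ->
  has_density P Theta fTheta ->
  indep_vec P Theta Z ->
  (* Laplace transform strictly decreasing, continuous, [0,oo) onto (0,1] *)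
  (forall s t : R, 0 <= s -> s < t -> laplace P Theta t < laplace P Theta s) ->
  {within `[0, +oo[%classic, continuous (laplace P Theta)} ->
  (forall s : R, 0 <= s -> 0 < laplace P Theta s <= 1) ->
  (forall u : R, 0 < u <= 1 -> exists2 s, 0 <= s & laplace P Theta s = u) ->
  (* Linv is its inverse *)
  (forall s : R, 0 <= s -> Linv (laplace P Theta s) = s) ->
  (forall u : R, 0 < u <= 1 -> 0 <= Linv u /\ laplace P Theta (Linv u) = u) ->
  (forall i (x : R), 0 <= x ->
     P [set w | x < Z i w / Theta w] = (laplace P Theta x)%:E) /\
  (forall x : 'I_n -> R, (forall i, 0 <= x i) ->
     P [set w | forall i, x i < Z i w / Theta w] =
     (survival_copula m alpha (laplace P Theta) Linv
        (fun i => laplace P Theta (x i)))%:E).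
Proof.
move=> _ _ _ mZ Z_surv Z_joint mTheta Theta_gt0 _ indep _ _ _ _ LinvK _.
have mixture := scale_mixture_survival mZ mTheta Theta_gt0 indep.
split.
- move=> i x x0.
  have -> : [set w | x < Z i w / Theta w] =
      [set w | forall j, pred1 i j -> (fun=> x) j < Z j w / Theta w].
    by apply/seteqP; split => w /= Hw => [j /eqP -> //|]; exact: Hw.
  rewrite (mixture _ _ 'I_1 (fun=> 1) (fun=> x)) ?big_ord1 ?mul1r // => t t0.
  rewrite big_ord1 mul1r -(Z_surv i) ?mulr_ge0 //; congr (P _).
  by rewrite /exceed; apply/seteqP; split => w /= Hw => [|j /eqP -> //]; apply: Hw.
- move=> x x0; rewrite survival_copula_laplace //.
  have -> : [set w | forall i, x i < Z i w / Theta w] =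
      [set w | forall i, predT i -> x i < Z i w / Theta w].
    by apply/seteqP; split => w /= Hw i; [move=> _|]; exact: Hw.
  apply: mixture => // [l|t t0].
    by apply: sumr_ge0 => i _; rewrite mulr_ge0.
  rewrite -bernstein_copula_exp -Z_joint => [|i]; last by rewrite mulr_ge0.
  by congr (P _); rewrite /exceed; apply/seteqP; split => w /= Hw i; [apply: Hw | move=> _; apply: Hw].
Qed.
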